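(* Let $X_1,\dots,X_n$ be i.i.d. with c.d.f. $F$ and mean $\mu$, let $p\geq1$ with $\nu_p<+\infty$. Let $k_1,k_2\in\mathbb{N}$ with $k_1+k_2<n$ and $k_{\min}:=\min\{k_1,k_2\}>0$. Then for any $t>0$, \[\Pr\left(\Delta_{n,k_1,k_2}>t\,\nu_p\left(\frac{n}{k_{\min}}\right)^{1/p}\right)\leq\left(\frac{e\,2^p\,\rho_{F,p}\left(\frac{2^p}{t^p}\frac{k_{\min}}{n}\right)^p}{t^p}\right)^{k_{\min}}.\]
   Context: $\nu_p:=(\mathbb{E}|X_1-\mu|^p)^{1/p}$. With order statistics $X_{(1)}\le\dots\le X_{(n)}$, the $(k_1,k_2)$-width is $\Delta_{n,k_1,k_2}:=X_{(n-k_2+1)}-X_{(k_1)}$. For $\xi>0$, $\rho_{F,p}(\xi):=\sup\{(\mathbb{E}[|X_1-\mu|^pZ])^{1/p}/\nu_p: 0\le Z\le1 \text{ a random variable (jointly defined with }X_1), \mathbb{E}Z\le\xi\}$ if $\nu_p>0$, and $0$ if $\nu_p=0$. *)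

From HB Require Import structures.
From mathcomp Require Import all_boot all_order all_algebra.
From mathcomp Require Import all_classical all_reals all_analysis.
Set Implicit Arguments. Unset Strict Implicit. Unset Printing Implicit Defensive.
Import Order.TTheory GRing.Theory Num.Theory.
Local Open Scope classical_set_scope.
Local Open Scope ring_scope.

Definition indep_RVs (d : measure_display) (T : measurableType d) (R : realType)
  (P : probability T R) (n : nat) (X : 'I_n -> T -> R) : Prop :=
  forall (S : {set 'I_n}) (B : 'I_n -> set R), (forall i, measurable (B i)) ->
    fine (P (\bigcap_(i in [set i | i \in S]) (X i @^-1` B i)))
    = \prod_(i in S) fine (P (X i @^-1` B i)).

Definition mean (d : measure_display) (T : measurableType d) (R : realType)
  (P : probability T R) (X : T -> R) : R :=
  fine (\int[P]_w (X w)%:E).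

Definition pmoment (d : measure_display) (T : measurableType d) (R : realType)
  (P : probability T R) (X : T -> R) (p : R) : \bar R :=
  (\int[P]_w ((`|X w - mean P X| `^ p)%:E))%E.

Definition nu_p (d : measure_display) (T : measurableType d) (R : realType)
  (P : probability T R) (X : T -> R) (p : R) : R :=
  fine (pmoment P X p) `^ p^-1.

Definition rho (R : realType) (F : R -> R) (p xi : R) : R :=
  sup [set r : R | exists (d : measure_display) (T : measurableType d)
        (P : probability T R) (X Z : T -> R),
     measurable_fun setT X /\ measurable_fun setT Z /\
         (forall x, fine (P [set w | X w <= x]) = F x) /\
         (forall w, 0 <= Z w <= 1) /\
         fine (\int[P]_w (Z w)%:E) <= xi /\
         r = if nu_p P X p == 0 then 0
             else fine (\int[P]_w ((`|X w - mean P X| `^ p * Z w)%:E)) `^ p^-1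
                  / nu_p P X p].

(* j-th order statistic X_(j) (1-indexed) of a sample x of size n *)
Definition order_stat (R : realType) (n : nat) (x : 'I_n -> R) (j : nat) : R :=
  nth 0 (sort <=%R [seq x i | i <- enum 'I_n]) j.-1.

Definition width (R : realType) (n k1 k2 : nat) (x : 'I_n -> R) : R :=
  order_stat x (n - k2 + 1) - order_stat x k1.

(* Write c := t nu (n/k)^(1/p) and k := min(k1, k2).  If the width exceeds c, then either
   X_(n-k2+1) > mu + c/2 or X_(k1) < mu - c/2, so at least k of the X_i lie at distance more
   than c/2 from mu.  By independence and a union bound over the k-subsets of indices this has
   probability at most C(n,k) q^k, where q := P(|X - mu| > c/2), and C(n,k) (k/n)^k <= e^k.
   To bound q, take for Z the indicator of {|X - mu| > c/2} in the definition of rho: Markov's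
   inequality gives E Z <= xi := 2^p k / (t^p n), so Z is admissible for rho(xi), whence
   (c/2)^p q <= E[|X - mu|^p Z] <= rho(xi)^p nu^p, i.e. q <= rho(xi)^p xi. *)

From HB Require Import structures.
From mathcomp Require Import all_boot all_order all_algebra.
From mathcomp Require Import all_classical all_reals all_analysis.
From mathcomp Require Import measurable_realfun zify ring lra.

Set Implicit Arguments.
Unset Strict Implicit.
Unset Printing Implicit Defensive.

Import Order.TTheory GRing.Theory Num.Theory.
Local Open Scope ring_scope.

Section sorted_nth.
Context {disp : Order.disp_t} {T : orderType disp} (x0 : T) (s : seq T).
Hypothesis s_sorted : sorted <=%O s.

Lemma sorted_lt_nth a i : (i < size s)%N ->
  (a < nth x0 s i)%O = (count (<= a)%O s <= i)%N.
Proof.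
move=> ltis; case: leqP => [lecount | ltcount].
  have : nth x0 s i \in drop (count (<= a)%O s) s.
    rewrite -[i in nth _ _ i](subnKC lecount) -nth_drop mem_nth //.
    by rewrite size_drop ltn_sub2r // (leq_ltn_trans lecount).
  by rewrite -sorted_filter_gt // mem_filter => /andP[].
have : nth x0 s i \in take (count (<= a)%O s) s.
  by rewrite -(nth_take _ ltcount) mem_nth // size_take_min leq_min ltcount.
by rewrite -sorted_filter_le // mem_filter => /andP[/= /le_gtF].
Qed.

Lemma sorted_nth_lt a i : (i < size s)%N ->
  (nth x0 s i < a)%O = (i < count (< a)%O s)%N.
Proof.
move=> ltis; case: ltnP => [ltcount | lecount].
  have : nth x0 s i \in take (count (< a)%O s) s.
    by rewrite -(nth_take _ ltcount) mem_nth // size_take_min leq_min ltcount.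
  by rewrite -sorted_filter_lt // mem_filter => /andP[].
have : nth x0 s i \in drop (count (< a)%O s) s.
  rewrite -[i in nth _ _ i](subnKC lecount) -nth_drop mem_nth //.
  by rewrite size_drop ltn_sub2r // (leq_ltn_trans lecount).
by rewrite -sorted_filter_ge // mem_filter => /andP[/= /le_gtF].
Qed.
End sorted_nth.

Section order_statistics.
Variables (R : realType) (n : nat) (x : 'I_n -> R).

Let xs := sort <=%R [seq x i | i <- enum 'I_n].

Let xs_sorted : sorted <=%R xs.
Proof. exact: (sort_sorted (@le_total _ R)). Qed.

Let size_xs : size xs = n.
Proof. by rewrite size_sort size_map size_enum_ord. Qed.

Let card_xs (P : pred R) : #|[set i | P (x i)]| = count P xs.
Proof. by rewrite count_sort count_map -sum1_count big_enum_cond /= sum1_card cardsE. Qed.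

Lemma order_stat_gt a j : (0 < j <= n)%N ->
  (a < order_stat x j) = (#|[set i | (x i <= a)%R]| < j)%N.
Proof.
case: j => // j /= ltjn.
by rewrite /order_stat /= sorted_lt_nth ?size_xs // -card_xs ltnS.
Qed.

Lemma order_stat_lt a j : (0 < j <= n)%N ->
  (order_stat x j < a) = (j <= #|[set i | (x i < a)%R]|)%N.
Proof.
case: j => // j /= ltjn.
by rewrite /order_stat /= sorted_nth_lt ?size_xs // -card_xs.
Qed.

End order_statistics.

Lemma width_gt_card_far (R : realType) n k1 k2 (x : 'I_n -> R) (m c : R) :
  (k1 + k2 < n)%N -> (0 < minn k1 k2)%N -> c < width k1 k2 x ->
  (minn k1 k2 <= #|[set i | (c / 2 < `|x i - m|)%R]|)%N.
Proof.
move=> ltkn; rewrite leq_min => /andP[k1_gt0 k2_gt0] c_lt_width.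
have [hi_gt | hi_le] := ltP (m + c / 2) (order_stat x (n - k2 + 1)).
  apply: leq_trans (geq_minr _ _) _.
  have : (k2 <= #|[set i | (m + c / 2 < x i)%R]|)%N.
    rewrite cardsCs card_ord.
    have -> : ~: [set i | (m + c / 2 < x i)%R] = [set i | (x i <= m + c / 2)%R].
      by apply/setP => i; rewrite !inE -leNgt.
    move: hi_gt; rewrite order_stat_gt; last by apply/andP; split; lia.
    lia.
  move/leq_trans; apply; apply: subset_leq_card; apply/fintype.subsetP => i.
  rewrite !inE => hi; rewrite ltr_normr; apply/orP; left; lra.
have lo_lt : order_stat x k1 < m - c / 2 by move: c_lt_width; rewrite /width; lra.
apply: leq_trans (geq_minl _ _) _.
move: lo_lt; rewrite order_stat_lt; last by apply/andP; split; lia.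
move/leq_trans; apply; apply: subset_leq_card; apply/fintype.subsetP => i.
rewrite !inE => hi; rewrite ltr_normr; apply/orP; right; lra.
Qed.

Lemma bin_mul_ratio_le_expR (R : realType) n k (y : R) : 0 <= y ->
  'C(n, k)%:R * (k%:R / n%:R * y) ^+ k <= (expR 1 * y) ^+ k.
Proof.
move=> y_ge0; rewrite !(exprMn _ _ y) mulrA ler_wpM2r ?exprn_ge0 //.
case: k => [|k]; first by rewrite bin0 !expr0 mulr1.
case: n => [|n]; first by rewrite bin0n mul0r exprn_ge0 ?expR_ge0.
set m := k.+1; set N := n.+1.
have binM_le : ('C(N, m) * m`! <= N ^ m)%N.
  have -> : (N ^ m = \prod_(i < m) N)%N by rewrite prod_nat_const card_ord.
  rewrite bin_ffact ffact_prod; apply: leq_prod => i _; exact: leq_subr.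
have powm_le : m%:R ^+ m / m`!%:R <= expR m%:R :> R.
  by apply: le_trans (expR_ge1Dxn k (ler0n _ m)); rewrite lerDr.
rewrite -expRM_natl mulr1; apply: le_trans powm_le.
have Nm_gt0 : 0 < N%:R ^+ m :> R by rewrite exprn_gt0 // ltr0n.
rewrite expr_div_n mulrA ler_pdivrMr // mulrAC ler_pdivlMr ?ltr0n ?fact_gt0 //.
by rewrite mulrAC [_ * N%:R ^+ m]mulrC ler_pM2r ?exprn_gt0 ?ltr0n // -natrM -natrX ler_nat.
Qed.

Lemma powR_half_threshold (R : realType) (p t nu r : R) :
  0 < p -> 0 < t -> 0 <= nu -> 0 < r ->
  2 `^ p / t `^ p * r^-1 * (t * nu * r `^ p^-1 / 2) `^ p = nu `^ p.
Proof.
move=> p_gt0 t_gt0 nu_ge0 r_gt0.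
have t_ge0 := ltW t_gt0; have r_ge0 := ltW r_gt0.
rewrite !powRM ?mulr_ge0 ?powR_ge0 ?invr_ge0 ?ler0n //.
rewrite -powRrM mulVf ?lt0r_neq0 // powRr1 //.
rewrite -(powR_inv1 (ler0n R 2)) powRAC powR_inv1 ?powR_ge0 //.
by field; rewrite !lt0r_neq0 ?powR_gt0.
Qed.

Local Open Scope classical_set_scope.

Lemma measure_fin_bigcup_le d (T : ringOfSetsType d) (R : realFieldType)
    (mu : {content set T -> \bar R}) (I : finType) (D : pred I) (B : I -> set T) :
  (forall i, measurable (B i)) ->
  (mu (\bigcup_(i in [set i | D i]) B i) <= \sum_(i | D i) mu (B i))%E.
Proof.
move=> mB; have -> : [set i | D i] = [set i | (i \in index_enum I) && D i].
  by apply/seteqP; split => i /=; rewrite mem_index_enum.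
rewrite bigcup_seq_cond.
suff [] : measurable (\big[setU/set0]_(i <- index_enum I | D i) B i) /\
    (mu (\big[setU/set0]_(i <- index_enum I | D i) B i) <= \sum_(i | D i) mu (B i))%E by [].
elim/big_ind2 : _ => [|U x V y [mU Ux] [mV Vy]|i _]; first by rewrite measure0.
  by split; [exact: measurableU | exact: le_trans (measureU2 _ mU mV) (leeD Ux Vy)].
by split.
Qed.

Lemma card_ge_bigcup (T : Type) n (A : 'I_n -> set T) k :
  [set w | (k <= #|[set i | w \in A i]%SET|)%N] =
  \bigcup_(S in [set S : {set 'I_n} | #|S| == k]) \bigcap_(i in [set i | i \in S]) A i.
Proof.
apply/seteqP; split => [w /= lek | w [S /= /eqP <- AS]].
  have : (0 < #|[set S : {set 'I_n} | S \subset [set i | w \in A i] & #|S| == k]%SET|)%N.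
    by rewrite cards_draws bin_gt0.
  case/card_gt0P => S; rewrite inE => /andP[/fintype.subsetP SA cardS].
  by exists S => // i /= /SA; rewrite inE in_setE.
apply: subset_leq_card; apply/fintype.subsetP => i iS.
by rewrite inE in_setE; exact: AS.
Qed.

Section card_ge_events.
Context d (T : measurableType d) (R : realType) (n : nat) (A : 'I_n -> set T).
Hypothesis mA : forall i, measurable (A i).

Let measurable_bigcap (S : {set 'I_n}) : measurable (\bigcap_(i in [set i | i \in S]) A i).
Proof. by apply: fin_bigcap_measurable => //; exact: finite_finset. Qed.

Lemma measurable_card_ge k : measurable [set w | (k <= #|[set i | w \in A i]%SET|)%N].
Proof.
by rewrite card_ge_bigcup; apply: fin_bigcup_measurable => //; exact: finite_finset.
Qed.

Lemma indep_card_ge_le (P : probability T R) k q :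
  (forall S : {set 'I_n},
    fine (P (\bigcap_(i in [set i | i \in S]) A i)) = \prod_(i in S) fine (P (A i))) ->
  (forall i, fine (P (A i)) <= q) ->
  (P [set w | (k <= #|[set i | w \in A i]%SET|)%N] <= ('C(n, k)%:R * q ^+ k)%:E)%E.
Proof.
move=> indepA le_q; rewrite card_ge_bigcup.
have := measure_fin_bigcup_le P (fun S : {set 'I_n} => #|S| == k) measurable_bigcap.
move/le_trans; apply.
apply: (@le_trans _ _ (\sum_(S : {set 'I_n} | #|S| == k) (q ^+ k)%:E)%E).
  apply: lee_sum => S /eqP <-.
  rewrite -(fineK (fin_num_measure P _ (measurable_bigcap S))) lee_fin indepA.
  by rewrite -prodr_const; apply: ler_prod => i _; rewrite fine_ge0 ?measure_ge0 ?le_q.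
by rewrite sumEFin lee_fin sumr_const -cardsE card_draws card_ord mulr_natl.
Qed.

End card_ge_events.

Lemma measurable_order_stat d (T : measurableType d) (R : realType) n
    (X : 'I_n -> T -> R) j :
  (forall i, measurable_fun setT (X i)) -> (0 < j <= n)%N ->
  measurable_fun setT (fun w => order_stat (fun i => X i w) j).
Proof.
move=> mX jn; apply: (measurability (@RGenInftyO.G R)) => [|_ [_ [a ->] <-]].
  exact: RGenInftyO.measurableE.
have below w : [set i | w \in X i @^-1` `]-oo, a[]%SET = [set i | (X i w < a)%R]%SET.
  by apply/setP => i; rewrite !inE; apply/idP/idP; rewrite in_setE /= in_itv.
have -> : (fun w => order_stat (fun i => X i w) j) @^-1` `]-oo, a[ =
    [set w | (j <= #|[set i | w \in X i @^-1` `]-oo, a[]%SET|)%N].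
  by apply/seteqP; split => w; rewrite /= in_itv /= order_stat_lt // below.
rewrite setTI; apply: (measurable_card_ge (A := fun i => X i @^-1` `]-oo, a[)) => i.
by rewrite -[_ @^-1` _]setTI; apply: mX.
Qed.

Lemma measurable_width d (T : measurableType d) (R : realType) n
    (X : 'I_n -> T -> R) k1 k2 :
  (forall i, measurable_fun setT (X i)) -> (k1 + k2 < n)%N -> (0 < minn k1 k2)%N ->
  measurable_fun setT (fun w => width k1 k2 (fun i => X i w)).
Proof.
move=> mX ltkn k_gt0; apply: measurable_funB; apply: measurable_order_stat => //.
all: by apply/andP; split; lia.
Qed.

Section moments.
Context d (T : measurableType d) (R : realType) (P : probability T R).

Lemma mean_eq_of_cdf (X Y : T -> R) (F : R -> R) :
  measurable_fun setT X -> measurable_fun setT Y ->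
  P.-integrable setT (EFin \o X) -> P.-integrable setT (EFin \o Y) ->
  (forall x, fine (P [set w | X w <= x]) = F x) ->
  (forall x, fine (P [set w | Y w <= x]) = F x) -> mean P X = mean P Y.
Proof.
move=> mX mY iX iY cdfX cdfY.
pose X' : {RV P >-> R} := HB.pack X (isMeasurableFun.Build _ _ _ _ _ mX).
pose Y' : {RV P >-> R} := HB.pack Y (isMeasurableFun.Build _ _ _ _ _ mY).
have cdfE r : cdf X' r = cdf Y' r.
  have preimE (Z : T -> R) : Z @^-1` `]-oo, r] = [set w | Z w <= r].
    by apply/seteqP; split => w /=; rewrite in_itv.
  have mle (Z : T -> R) : measurable_fun setT Z -> measurable [set w | Z w <= r].
    by move=> mZ; rewrite -preimE -[_ @^-1` _]setTI; apply: mZ.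
  rewrite /cdf /distribution /pushforward /= !preimE.
  rewrite -(fineK (fin_num_measure P _ (mle _ mX))).
  by rewrite -(fineK (fin_num_measure P _ (mle _ mY))) cdfX cdfY.
have meanE (Z : {RV P >-> R}) : mean P Z = fine 'E_P[Z] by rewrite expectation_def.
rewrite (meanE X') (meanE Y') !expectation_cdf_ccdf; try exact/Lfun1_integrable.
by congr (fine (_ - _))%E; apply: eq_integral => r _; rewrite ?ccdf_1_cdf cdfE.
Qed.

Lemma measurable_gt_set (f : T -> R) (c : R) : measurable_fun setT f ->
  measurable [set w | c < f w].
Proof.
move=> mf; rewrite (_ : [set w | c < f w] = f @^-1` `]c, +oo[).
  by rewrite -[_ @^-1` _]setTI; apply: mf.
by apply/seteqP; split => w /=; rewrite in_itv /= andbT.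
Qed.

Lemma measurable_dev (X : T -> R) (m : R) : measurable_fun setT X ->
  measurable_fun setT (fun w => `|X w - m|).
Proof.
move=> mX; apply: (measurableT_comp (@normr_measurable R setT)).
by apply: measurable_funB => //; exact: measurable_cst.
Qed.

Lemma measurable_powR_dev (X : T -> R) (m p : R) : measurable_fun setT X ->
  measurable_fun setT (fun w => `|X w - m| `^ p).
Proof. by move=> mX; apply: (measurableT_comp (measurable_powR p)); exact: measurable_dev. Qed.

Lemma weighted_pmoment_le (X Z : T -> R) (p : R) :
  measurable_fun setT X -> measurable_fun setT Z -> (forall w, 0 <= Z w <= 1) ->
  (0 <= \int[P]_w ((`|X w - mean P X| `^ p * Z w)%:E) <= pmoment P X p)%E.
Proof.
move=> mX mZ Z01; have Z0 w : 0 <= Z w by case/andP: (Z01 w).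
apply/andP; split.
  by apply: integral_ge0 => w _; rewrite lee_fin mulr_ge0 ?powR_ge0.
apply: ge0_le_integral => //.
- by move=> w _; rewrite lee_fin mulr_ge0 ?powR_ge0.
- by apply/measurable_EFinP; apply: measurable_funM => //; exact: measurable_powR_dev.
- by apply/measurable_EFinP; exact: measurable_powR_dev.
by move=> w _; rewrite lee_fin ler_piMr ?powR_ge0 //; case/andP: (Z01 w).
Qed.

Lemma pmoment_ge0 (X : T -> R) (p : R) : (0 <= pmoment P X p)%E.
Proof. by apply: integral_ge0 => w _; rewrite lee_fin powR_ge0. Qed.

Lemma powR_nu_p (X : T -> R) (p : R) : 0 < p ->
  nu_p P X p `^ p = fine (pmoment P X p).
Proof.
by move=> p_gt0; rewrite -powRrM mulVf ?gt_eqF // powRr1 // fine_ge0 // pmoment_ge0.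
Qed.

Lemma fine_weighted_pmoment_le (X Z : T -> R) (p : R) :
  measurable_fun setT X -> measurable_fun setT Z -> (forall w, 0 <= Z w <= 1) ->
  (pmoment P X p < +oo)%E ->
  0 <= fine (\int[P]_w ((`|X w - mean P X| `^ p * Z w)%:E)) <= fine (pmoment P X p).
Proof.
move=> mX mZ Z01 M_fin; have /andP[I_ge0 I_le] := weighted_pmoment_le p mX mZ Z01.
rewrite fine_ge0 //=; apply: fine_le => //; rewrite ge0_fin_numE //.
  exact: le_lt_trans M_fin.
exact: le_trans I_le.
Qed.

Lemma pmoment_eq0_dev (X : T -> R) (p : R) : 0 < p -> measurable_fun setT X ->
  pmoment P X p = 0%E -> P [set w | 0 < `|X w - mean P X|] = 0%E.
Proof.
move=> p_gt0 mX M0.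
have : ae_eq P setT (fun w => (`|X w - mean P X| `^ p)%:E) (cst 0%E).
  apply/ae_eq_integral_abs => //; first exact/measurable_EFinP/measurable_powR_dev.
  rewrite -[RHS]M0; apply: eq_integral => w _.
  by rewrite gee0_abs // lee_fin powR_ge0.
case=> N [mN PN0 sN]; apply: (subset_measure0 (measurable_gt_set _ (measurable_dev _ mX)) mN _ PN0).
move=> w /= dev_gt0; apply: sN => /(_ I) /= /eqP.
by rewrite eqe powR_eq0 (gt_eqF p_gt0) andbT => /eqP dev0; rewrite dev0 ltxx in dev_gt0.
Qed.

Lemma markov_dev_indic (X : T -> R) (A : set T) (p s : R) :
  0 <= p -> 0 <= s -> measurable_fun setT X -> measurable A ->
  (forall w, A w -> s <= `|X w - mean P X|) ->
  ((s `^ p)%:E * P A <= \int[P]_w ((`|X w - mean P X| `^ p * \1_A w)%:E))%E.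
Proof.
move=> p_ge0 s_ge0 mX mA A_dev.
have -> : P A = (\int[P]_w (\1_A w)%:E)%E by rewrite integral_indic // setIT.
rewrite -ge0_integralZl_EFin ?powR_ge0 //; last exact/measurable_EFinP/measurable_indic.
under eq_integral do rewrite -EFinM.
apply: ge0_le_integral => //.
- by move=> w _; rewrite lee_fin mulr_ge0 ?powR_ge0.
- exact/measurable_EFinP/measurable_funM/measurable_indic.
- apply/measurable_EFinP/measurable_funM; last exact: measurable_indic.
  exact: measurable_powR_dev.
move=> w _; rewrite lee_fin indicE; case: (boolP (w \in A)) => [|_]; last by rewrite !mulr0.
by rewrite inE => /A_dev s_le; rewrite !mulr1 ge0_ler_powR // nnegrE (le_trans s_ge0 s_le).
Qed.

End moments.

Section rho_bounds.
Context d (T : measurableType d) (R : realType) (P : probability T R).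

Lemma le_rho (X Z : T -> R) (F : R -> R) (p xi : R) : 0 < p ->
  measurable_fun setT X -> measurable_fun setT Z ->
  (forall x, fine (P [set w | X w <= x]) = F x) -> (forall w, 0 <= Z w <= 1) ->
  fine (\int[P]_w (Z w)%:E) <= xi -> nu_p P X p != 0 ->
  fine (\int[P]_w ((`|X w - mean P X| `^ p * Z w)%:E)) `^ p^-1 / nu_p P X p
    <= rho F p xi.
Proof.
move=> p_gt0 mX mZ cdfX Z01 EZ_le nu_neq0; rewrite /rho.
set ratio := _ / _; set S := (X in sup X).
have S_ratio : S ratio by exists d, T, P, X, Z; rewrite (negbTE nu_neq0).
apply: sup_upper_bound => //; split; first by exists ratio.
(* Every ratio in the set is at most 1, since E[|X - mu|^p Z] <= nu^p. *)
exists 1 => _ [d' [T' [P' [X' [Z' [mX' [mZ' [_ [Z01' [_ ->]]]]]]]]]].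
case: ifPn => [_|nu'_neq0]; first exact: ler01.
(* [fine +oo = 0], so [nu_p] vanishes when the moment is infinite. *)
have M'_fin : (pmoment P' X' p < +oo)%E.
  rewrite ltey; apply: contraNneq nu'_neq0 => M'_oo.
  by rewrite /nu_p M'_oo /= powR0 // invr_neq0 // gt_eqF.
have nu'_gt0 : 0 < nu_p P' X' p by rewrite lt_def nu'_neq0 powR_ge0.
have /andP[I'_ge0 I'_le] := fine_weighted_pmoment_le mX' mZ' Z01' M'_fin.
rewrite ler_pdivrMr // mul1r; apply: ge0_ler_powR => //.
  by rewrite invr_ge0 ltW.
by rewrite nnegrE fine_ge0 // pmoment_ge0.
Qed.

Lemma weighted_pmoment_le_rho (X Z : T -> R) (F : R -> R) (p xi : R) : 0 < p ->
  measurable_fun setT X -> measurable_fun setT Z ->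
  (forall x, fine (P [set w | X w <= x]) = F x) -> (forall w, 0 <= Z w <= 1) ->
  fine (\int[P]_w (Z w)%:E) <= xi -> (pmoment P X p < +oo)%E ->
  fine (\int[P]_w ((`|X w - mean P X| `^ p * Z w)%:E))
    <= rho F p xi `^ p * fine (pmoment P X p).
Proof.
move=> p_gt0 mX mZ cdfX Z01 EZ_le M_fin.
have /andP[I_ge0 I_le] := fine_weighted_pmoment_le mX mZ Z01 M_fin.
rewrite -(powR_nu_p P X p_gt0) in I_le *.
have [nu0|nu_neq0] := eqVneq (nu_p P X p) 0.
  by move: I_le; rewrite nu0 powR0 ?gt_eqF // mulr0.
have nu_gt0 : 0 < nu_p P X p by rewrite lt_def nu_neq0 powR_ge0.
have ratio_le := le_rho p_gt0 mX mZ cdfX Z01 EZ_le nu_neq0.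
have rho_ge0 : 0 <= rho F p xi.
  by apply: le_trans ratio_le; rewrite divr_ge0 ?powR_ge0 // ltW.
rewrite ler_pdivrMr // in ratio_le.
rewrite -powRM ?(ltW nu_gt0) // -[leLHS](powRr1 I_ge0) -(mulVf (lt0r_neq0 p_gt0)) powRrM.
by apply: ge0_ler_powR ratio_le; rewrite ?nnegrE ?powR_ge0 ?mulr_ge0 // ltW.
Qed.

Lemma dev_gt_le_rho (X : T -> R) (F : R -> R) (p xi s : R) : 0 < p ->
  measurable_fun setT X -> (forall x, fine (P [set w | X w <= x]) = F x) ->
  (pmoment P X p < +oo)%E -> 0 <= xi -> 0 <= s ->
  fine (pmoment P X p) <= xi * s `^ p ->
  fine (P [set w | s < `|X w - mean P X|]) <= rho F p xi `^ p * xi.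
Proof.
move=> p_gt0 mX cdfX M_fin xi_ge0 s_ge0 M_le.
set A := [set w | s < `|X w - mean P X|].
have mA : measurable A := measurable_gt_set _ (measurable_dev _ mX).
have PA_fin : P A \is a fin_num := fin_num_measure P A mA.
have M_fin_num : pmoment P X p \is a fin_num by rewrite ge0_fin_numE ?pmoment_ge0.
have [s0|s_gt0] := eqVneq s 0.
  (* then the p-th central moment vanishes, so X = mu almost surely *)
  have M0 : pmoment P X p = 0%E.
    apply/eqP; rewrite eq_le pmoment_ge0 andbT -(fineK M_fin_num) lee_fin.
    by move: M_le; rewrite s0 powR0 ?gt_eqF // mulr0.
  by rewrite /A s0 (pmoment_eq0_dev p_gt0 mX M0) /= mulr_ge0 ?powR_ge0.
have sp_gt0 : 0 < s `^ p by rewrite powR_gt0 // lt_def s_gt0.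
pose Z := \1_A : T -> R.
have Z01 w : 0 <= Z w <= 1 by rewrite /Z indicE; case: (w \in A); rewrite ?lexx ?ler01.
have mZ : measurable_fun setT Z := measurable_indic mA.
have EZ : fine (\int[P]_w (Z w)%:E) = fine (P A) by rewrite integral_indic // setIT.
have markov : s `^ p * fine (P A) <= fine (\int[P]_w ((`|X w - mean P X| `^ p * Z w)%:E)).
  have /andP[I_ge0 I_le_M] := weighted_pmoment_le P p mX mZ Z01.
  rewrite -lee_fin EFinM (fineK PA_fin) fineK ?ge0_fin_numE ?(le_lt_trans I_le_M M_fin) //.
  by apply: markov_dev_indic => //; [exact: ltW | move=> w /ltW].
have /andP[_ I_le] := fine_weighted_pmoment_le mX mZ Z01 M_fin.
have EZ_le : fine (\int[P]_w (Z w)%:E) <= xi.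
  rewrite EZ -(ler_pM2l sp_gt0) [_ * xi]mulrC.
  exact: le_trans markov (le_trans I_le M_le).
have := le_trans markov (weighted_pmoment_le_rho p_gt0 mX mZ cdfX Z01 EZ_le M_fin).
move=> /le_trans/(_ (ler_wpM2l (powR_ge0 _ _) M_le)).
by rewrite mulrA [leRHS]mulrC ler_pM2l.
Qed.

End rho_bounds.

Theorem proposition4p5 (R : realType) (d : measure_display) (T : measurableType d)
  (P : probability T R) (n : nat) (X : 'I_n -> T -> R) (F : R -> R)
  (p nu t : R) (k1 k2 : nat) :
  (forall i, measurable_fun setT (X i)) ->
  indep_RVs P X ->
  (forall i x, fine (P [set w | X i w <= x]) = F x) ->
  (forall i, P.-integrable setT (EFin \o X i)) ->
  1 <= p ->
  (forall i, (pmoment P (X i) p < +oo)%E) ->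
  (forall i, nu_p P (X i) p = nu) ->
  (k1 + k2 < n)%N -> (0 < minn k1 k2)%N ->
  0 < t ->
  (P [set w | (t * nu * ((n%:R / (minn k1 k2)%:R) `^ p^-1) < width k1 k2 (fun i => X i w))%R]
   <= ((expR 1 * 2 `^ p * (rho F p (2 `^ p / t `^ p * ((minn k1 k2)%:R / n%:R))) `^ p
        / t `^ p) ^+ minn k1 k2)%:E)%E.
Proof.
move=> mX indepX cdfX intX p_ge1 M_fin nuX ltkn k_gt0 t_gt0.
set k := minn k1 k2; set xi := _ * (_ / _); set c := t * nu * _.
have p_gt0 : 0 < p := lt_le_trans ltr01 p_ge1.
have n_gt0 : (0 < n)%N := leq_ltn_trans (leq0n _) ltkn.
pose mu := mean P (X (Ordinal n_gt0)).
have meanX i : mean P (X i) = mu.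
  exact: mean_eq_of_cdf (mX i) (mX _) (intX i) (intX _) (cdfX i) (cdfX _).
have nu_ge0 : 0 <= nu by rewrite -(nuX (Ordinal n_gt0)) powR_ge0.
have xi_ge0 : 0 <= xi by rewrite !mulr_ge0 ?invr_ge0 ?powR_ge0.
pose B := [set y : R | c / 2 < `|y - mu|].
have mB : measurable B := measurable_gt_set _ (measurable_dev _ (@measurable_id _ R setT)).
have mA i : measurable (X i @^-1` B) by rewrite -[_ @^-1` _]setTI; apply: mX.
have PA_le i : fine (P (X i @^-1` B)) <= rho F p xi `^ p * xi.
  rewrite /B -(meanX i); apply: dev_gt_le_rho => //.
    by rewrite !mulr_ge0 ?powR_ge0 ?invr_ge0 // ltW.
  by rewrite -powR_nu_p // nuX /xi /c -[k%:R / _]invf_div powR_half_threshold ?divr_gt0 ?ltr0n.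
have card_le := indep_card_ge_le mA k (fun S => indepX S _ (fun=> mB)) PA_le.
have mE := measurable_gt_set c (measurable_width mX ltkn k_gt0).
have E_sub : [set w | c < width k1 k2 (fun i => X i w)] `<=`
    [set w | (k <= #|[set i | w \in X i @^-1` B]%SET|)%N].
  move=> w /= /(width_gt_card_far mu ltkn k_gt0); congr (_ <= _)%N.
  by apply: eq_card => i; rewrite !inE; apply/idP/idP; rewrite in_setE.
have PE_le := le_measure P (mem_set mE) (mem_set (measurable_card_ge mA k)) E_sub.
apply: le_trans (le_trans PE_le card_le) _; rewrite lee_fin.
set Y := 2 `^ p * rho F p xi `^ p / t `^ p.
have -> : rho F p xi `^ p * xi = k%:R / n%:R * Y by rewrite /xi /Y; ring.
rewrite (_ : _ / t `^ p = expR 1 * Y) ?[in RHS]mulrA //.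
by rewrite bin_mul_ratio_le_expR // /Y !mulr_ge0 ?invr_ge0 ?powR_ge0.
Qed.
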